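(* Let $N\ge2$, $t,r\ge1$, $m=t+r<N$, $K\ge N$, and let $n_0=K-(N-t)+1$. Fix $y\in(0,1]$ and, for $s\ge0$, consider the family of densities on $(0,1]$ $$g_s(x)=f_\beta(x;n_0,r,0)\,e^{-s xy}\sum_{k=0}^{n_0}\binom{n_0}{k}\frac{(r-1)!}{(r+k-1)!}[s\,y(1-x)]^k,$$ which is the conditional pdf of $p_1$ given $p_2=y$ when $\mathrm{SINR}=s$ (with $s=0$ corresponding to $H_0$). Then for every $s>0$ the likelihood ratio $g_s(x)/g_0(x)$ is a nonincreasing function of $x\in(0,1]$; consequently, conditionally on $p_2$, the test that decides $H_1$ when $p_1<\eta$ (equivalently, when $(1-p_1)/p_1>\eta'$) is uniformly most powerful for testing $\mathrm{SINR}=0$ against $\mathrm{SINR}>0$ based on $p_1$.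
   Context: $f_\beta(x;n,m,0)=\frac{(n+m-1)!}{(n-1)!(m-1)!}x^{n-1}(1-x)^{m-1}$ is the complex central beta pdf. $p_1=1/\bigl(1+\frac{m_1}{1+m_2}\bigr)$, $p_2=1/(1+m_2)$ where $m_1=\mathbf{z}_{2.3}^\dagger\mathbf{S}_{2.3}^{-1}\mathbf{z}_{2.3}$, $m_2=\mathbf{z}_3^\dagger\mathbf{S}_{33}^{-1}\mathbf{z}_3$, for the primary vector $\mathbf{z}\in\mathbb{C}^N$ partitioned into blocks of sizes $t,r,N-m$ and sample matrix $\mathbf{S}$ partitioned conformably, $\mathbf{z}_{2.3}=\mathbf{z}_2-\mathbf{S}_{23}\mathbf{S}_{33}^{-1}\mathbf{z}_3$, $\mathbf{S}_{2.3}=\mathbf{S}_{22}-\mathbf{S}_{23}\mathbf{S}_{33}^{-1}\mathbf{S}_{32}$; $(p_1,p_2)$ is the (transformed) maximal invariant of the adaptive subspace detection problem with structured interference, whose second component $p_2$ has the same distribution under both hypotheses. *)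

From HB Require Import structures.
From mathcomp Require Import all_boot all_order all_algebra.
From mathcomp Require Import all_classical all_reals all_analysis.
Set Implicit Arguments. Unset Strict Implicit. Unset Printing Implicit Defensive.
Import Order.TTheory GRing.Theory Num.Theory.
Local Open Scope ring_scope.
Local Open Scope classical_set_scope.

Definition fbeta (R : realType) (n m : nat) (x : R) : R :=
  ((n + m - 1)`!%:R / ((n - 1)`!%:R * (m - 1)`!%:R))
  * x ^+ (n - 1) * (1 - x) ^+ (m - 1).

Definition n0_of (K N t : nat) : nat := (K - (N - t)).+1.

Definition gdens (R : realType) (n0 r : nat) (y s x : R) : R :=
  fbeta n0 r x * expR (- (s * x * y)) *
  \sum_(k < n0.+1) ('C(n0, k)%:R * ((r - 1)`!%:R / (r + k - 1)`!%:R)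
                    * (s * y * (1 - x)) ^+ k).

Definition thr_test (R : realType) (eta : R) (x : R) : R :=
  if x < eta then 1 else 0.

(** The statistic [g_s] factors as [fbeta x * L_s x], where the likelihood
    ratio [L_s x = e^{-sxy} * P(s y (1 - x))] is the product of two
    nonnegative nonincreasing functions of [x] on [[0, 1]], since the
    polynomial [P] has nonnegative coefficients.  Monotonicity of [L_s] is
    the monotone likelihood ratio property, and it shows that the threshold
    test [x < eta] is a Neyman-Pearson test with constant [k = L_s eta]:
    [(T x - phi x) * (g_s x - k g_0 x) >= 0] for every test [phi].
    Integrating this inequality gives the UMP property. *)
From HB Require Import structures.
From mathcomp Require Import all_boot all_order all_algebra.
From mathcomp Require Import all_classical all_reals all_analysis.
From mathcomp Require Import measurable_realfun ring.
Import Order.TTheory GRing.Theory Num.Theory.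
Local Open Scope ring_scope.
Local Open Scope classical_set_scope.

Section NeymanPearson.
Context {d : measure_display} {T : measurableType d} {R : realType}.
Variables (mu : {measure set T -> \bar R}) (D : set T).
Hypothesis mD : measurable D.

Lemma ge0_integralDZr (k : R) (f g : T -> R) : 0 <= k ->
  (forall x, D x -> 0 <= f x) -> (forall x, D x -> 0 <= g x) ->
  measurable_fun D f -> measurable_fun D g ->
  (\int[mu]_(x in D) (f x + k * g x)%:E
   = \int[mu]_(x in D) (f x)%:E + k%:E * \int[mu]_(x in D) (g x)%:E)%E.
Proof.
move=> k0 f0 g0 mf mg.
rewrite -ge0_integralZl_EFin //.
rewrite -(ge0_integralD mu mD (f1 := fun x => (f x)%:E)
                              (f2 := fun x => (k%:E * (g x)%:E)%E)) //.
- exact/measurable_EFinP.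
- by move=> x Dx; rewrite mule_ge0 // lee_fin g0.
- by apply: measurable_funeM; apply/measurable_EFinP.
- exact/measurable_EFinP.
Qed.

Variables (f0 f1 tst phi : T -> R) (k : R).
Hypotheses (k0 : 0 <= k)
  (mf0 : measurable_fun D f0) (mf1 : measurable_fun D f1)
  (mtst : measurable_fun D tst) (mphi : measurable_fun D phi)
  (f0_ge0 : forall x, D x -> 0 <= f0 x) (f1_ge0 : forall x, D x -> 0 <= f1 x)
  (tst_ge0 : forall x, D x -> 0 <= tst x) (phi_ge0 : forall x, D x -> 0 <= phi x)
  (tst_np : forall x, D x -> 0 <= (tst x - phi x) * (f1 x - k * f0 x))
  (tst_f0_int : mu.-integrable D (fun x => (tst x * f0 x)%:E)).

Lemma neyman_pearson :
  (\int[mu]_(x in D) (phi x * f0 x)%:E <= \int[mu]_(x in D) (tst x * f0 x)%:E)%E ->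
  (\int[mu]_(x in D) (phi x * f1 x)%:E <= \int[mu]_(x in D) (tst x * f1 x)%:E)%E.
Proof.
move=> size_le.
have prod_ge0 (u v : T -> R) : (forall x, D x -> 0 <= u x) ->
    (forall x, D x -> 0 <= v x) -> forall x, D x -> 0 <= u x * v x.
  by move=> u0 v0 x Dx; rewrite mulr_ge0 ?u0 ?v0.
have pointwise x : D x ->
    phi x * f1 x + k * (tst x * f0 x) <= tst x * f1 x + k * (phi x * f0 x).
  move=> Dx; rewrite -subr_ge0.
  have -> : tst x * f1 x + k * (phi x * f0 x) - (phi x * f1 x + k * (tst x * f0 x))
          = (tst x - phi x) * (f1 x - k * f0 x) by ring.
  exact: tst_np.
have integrated : (\int[mu]_(x in D) (phi x * f1 x + k * (tst x * f0 x))%:E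
                <= \int[mu]_(x in D) (tst x * f1 x + k * (phi x * f0 x))%:E)%E.
  apply: ge0_le_integral => //.
  - by move=> x Dx; rewrite lee_fin addr_ge0 ?mulr_ge0 ?phi_ge0 ?f1_ge0 ?tst_ge0 ?f0_ge0.
  - apply/measurable_EFinP; apply: measurable_funD; first exact: measurable_funM.
    by apply: measurable_funM => //; exact: measurable_funM.
  - apply/measurable_EFinP; apply: measurable_funD; first exact: measurable_funM.
    by apply: measurable_funM => //; exact: measurable_funM.
rewrite (ge0_integralDZr _ _ _ k0 (prod_ge0 _ _ phi_ge0 f1_ge0)
  (prod_ge0 _ _ tst_ge0 f0_ge0) (measurable_funM mphi mf1) (measurable_funM mtst mf0))
  in integrated.
rewrite (ge0_integralDZr _ _ _ k0 (prod_ge0 _ _ tst_ge0 f1_ge0)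
  (prod_ge0 _ _ phi_ge0 f0_ge0) (measurable_funM mtst mf1) (measurable_funM mphi mf0))
  in integrated.
have fin : (k%:E * \int[mu]_(x in D) (tst x * f0 x)%:E)%E \is a fin_num.
  by rewrite fin_numM // (integrable_fin_num mD tst_f0_int).
rewrite -(leeD2rE _ _ fin); apply: (le_trans integrated).
by apply: leeD2l; apply: lee_wpmul2l; rewrite ?lee_fin.
Qed.

End NeymanPearson.

Section BetaDensity.
Context {R : realType}.
Implicit Types x : R.

Lemma fbeta_ge0 n m x : 0 <= x <= 1 -> 0 <= fbeta n m x.
Proof. by case/andP=> x0 x1; rewrite /fbeta !mulr_ge0 ?exprn_ge0 ?subr_ge0. Qed.

Lemma fbeta_gt0 n m x : 0 < x < 1 -> 0 < fbeta n m x.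
Proof. by case/andP=> x0 x1; rewrite /fbeta !mulr_gt0 ?exprn_gt0 ?subr_gt0. Qed.

Lemma fbeta_le n m x : 0 <= x <= 1 ->
  fbeta n m x <= (n + m - 1)`!%:R / ((n - 1)`!%:R * (m - 1)`!%:R).
Proof.
case/andP=> x0 x1; rewrite /fbeta -mulrA -[leRHS]mulr1.
rewrite ler_wpM2l ?divr_ge0 ?mulr_ge0 ?ler0n //.
by rewrite mulr_ile1 ?exprn_ge0 ?exprn_ile1 ?subr_ge0 ?lerBlDr ?lerDl.
Qed.

(* [fbeta] can only vanish on [(0, 1]] at [x = 1]. *)
Lemma fbeta_neq0 n m x1 x2 : 0 < x1 -> x1 <= x2 -> x2 <= 1 ->
  fbeta n m x2 != 0 -> fbeta n m x1 != 0.
Proof.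
move=> x10 x12 x21; have [x11 _|x11] := ltP x1 1.
  by rewrite gt_eqF // fbeta_gt0 // x10 x11.
suff -> : x1 = x2 by [].
by apply/eqP; rewrite eq_le x12 (le_trans x21 x11).
Qed.

Lemma measurable_fbeta n m : measurable_fun [set: R] (fbeta n m).
Proof.
apply: measurable_funM; first exact: measurable_funM.
by apply: measurable_funX; exact: measurable_funB.
Qed.

Lemma integrable_mul_fbeta n m (f : R -> R) :
  measurable_fun (`]0%R, 1%R]%classic : set R) f ->
  {in `]0, 1], forall x, `|f x| <= 1} ->
  lebesgue_measure.-integrable (`]0%R, 1%R]%classic : set R)
    (fun x => (f x * fbeta n m x)%:E).
Proof.
move=> mf f_le1; apply: measurable_bounded_integrable.
- exact: measurable_itv.
- have mu01 : lebesgue_measure (`]0%R, 1%R]%classic : set R) = 1%E.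
    by rewrite lebesgue_measure_itv /= lte01 EFinN sube0.
  by rewrite [X in (X < _)%E](_ : _ = 1%E) ?ltry.
- apply: measurable_funM => //.
  exact: measurable_funS measurableT (@subsetT _ _) (measurable_fbeta n m).
rewrite /bounded_near; near=> M => x /= x01.
have /andP[x0 x1] : 0 <= x <= 1 by move: x01; rewrite /= in_itv /= => /andP[/ltW -> ->].
rewrite normrM (@le_trans _ _ ((n + m - 1)`!%:R / ((n - 1)`!%:R * (m - 1)`!%:R))) //.
rewrite -[leRHS]mul1r ler_pM ?normr_ge0 ?f_le1 ?inE //.
by rewrite ger0_norm ?fbeta_le ?fbeta_ge0 ?x0.
Unshelve. all: by end_near.
Qed.

End BetaDensity.

Section LikelihoodRatio.
Context {R : realType}.
Implicit Types (y s x eta : R).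

Definition gdens_coef (n0 r k : nat) : R :=
  'C(n0, k)%:R * ((r - 1)`!%:R / (r + k - 1)`!%:R).

Definition likratio (n0 r : nat) y s x : R :=
  expR (- (s * x * y)) *
  \sum_(k < n0.+1) (gdens_coef n0 r k * (s * y * (1 - x)) ^+ k).

Lemma gdens_coef_ge0 n0 r k : 0 <= gdens_coef n0 r k.
Proof. by rewrite /gdens_coef mulr_ge0 ?divr_ge0 ?ler0n. Qed.

Lemma gdensE n0 r y s x : gdens n0 r y s x = fbeta n0 r x * likratio n0 r y s x.
Proof. by rewrite /gdens /likratio mulrA. Qed.

Lemma likratio0 n0 r y x : likratio n0 r y 0 x = 1.
Proof.
rewrite /likratio !mul0r oppr0 expR0 mul1r big_ord_recl big1 ?addr0.
  by rewrite /gdens_coef bin0 addn0 expr0 mulr1 mul1r divff.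
by move=> i _; rewrite expr0n mulr0.
Qed.

Lemma gdens0 n0 r y x : gdens n0 r y 0 x = fbeta n0 r x.
Proof. by rewrite gdensE likratio0 mulr1. Qed.

Lemma likratio_ge0 n0 r y s x : 0 <= y -> 0 <= s -> x <= 1 ->
  0 <= likratio n0 r y s x.
Proof.
move=> y0 s0 x1; rewrite /likratio mulr_ge0 ?expR_ge0 // sumr_ge0 // => k _.
by rewrite mulr_ge0 ?gdens_coef_ge0 // exprn_ge0 // !mulr_ge0 // subr_ge0.
Qed.

Lemma likratio_nonincr n0 r y s x1 x2 : 0 <= y -> 0 <= s ->
  x1 <= x2 -> x2 <= 1 -> likratio n0 r y s x2 <= likratio n0 r y s x1.
Proof.
move=> y0 s0 x12 x21; have sy0 : 0 <= s * y by rewrite mulr_ge0.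
apply: ler_pM.
- exact: expR_ge0.
- rewrite sumr_ge0 // => k _.
  by rewrite mulr_ge0 ?gdens_coef_ge0 // exprn_ge0 // mulr_ge0 // subr_ge0.
- by rewrite ler_expR lerN2 -!mulrA [x1 * y]mulrC [x2 * y]mulrC !mulrA ler_wpM2l.
- apply: ler_sum => k _; rewrite ler_wpM2l ?gdens_coef_ge0 //.
  by rewrite lerXn2r ?nnegrE ?mulr_ge0 ?subr_ge0 ?ler_wpM2l ?lerB //;
     apply: le_trans x21.
Qed.

Lemma gdens_ge0 n0 r y s x : 0 <= y -> 0 <= s -> 0 <= x <= 1 ->
  0 <= gdens n0 r y s x.
Proof.
move=> y0 s0 /[dup] x01 /andP[_ x1].
by rewrite gdensE mulr_ge0 ?fbeta_ge0 ?likratio_ge0.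
Qed.

(* At [x = 1] both densities may vanish; then the ratio is [0 / 0 = 0]. *)
Lemma gdens_mlr n0 r y s : 0 <= y -> 0 <= s ->
  {in `]0, 1] &, forall x1 x2 : R, x1 <= x2 ->
     gdens n0 r y s x2 / gdens n0 r y 0 x2 <= gdens n0 r y s x1 / gdens n0 r y 0 x1}.
Proof.
move=> y0 s0 x1 x2; rewrite !inE /= !in_itv /= => /andP[x10 x11] /andP[_ x21] x12.
rewrite !gdens0 !gdensE.
have [->|fx2_neq0] := eqVneq (fbeta n0 r x2) 0.
  have fx1_ge0 : 0 <= fbeta n0 r x1 by rewrite fbeta_ge0 // (ltW x10).
  by rewrite !mul0r divr_ge0 // mulr_ge0 // likratio_ge0.
have fx1_neq0 : fbeta n0 r x1 != 0 by exact: fbeta_neq0 x10 x12 x21 fx2_neq0.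
rewrite [fbeta _ _ x1 * _]mulrC [fbeta _ _ x2 * _]mulrC !mulfK //.
exact: likratio_nonincr.
Qed.

Lemma measurable_gdens n0 r y s : measurable_fun [set: R] (gdens n0 r y s).
Proof.
apply: measurable_funM; first apply: measurable_funM.
- exact: measurable_fbeta.
- apply: measurableT_comp => //; apply: measurable_funN.
  by apply: measurable_funM => //; exact: measurable_funM.
- apply: measurable_sum => k; apply: measurable_funM => //.
  apply: measurable_funX; apply: measurable_funM => //; exact: measurable_funB.
Qed.

Lemma thr_test_ge0 eta x : 0 <= thr_test eta x <= 1.
Proof. by rewrite /thr_test; case: ifP; rewrite lexx ler01. Qed.

Lemma measurable_thr_test eta : measurable_fun [set: R] (thr_test eta).
Proof. by apply: measurable_fun_ifT => //; exact: measurable_fun_ltr. Qed.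

Lemma thr_test_np n0 r y s eta x p :
  0 <= y -> 0 <= s -> eta <= 1 -> 0 <= x <= 1 -> 0 <= p <= 1 ->
  0 <= (thr_test eta x - p)
       * (gdens n0 r y s x - likratio n0 r y s eta * gdens n0 r y 0 x).
Proof.
move=> y0 s0 eta1 /[dup] x01 /andP[_ x1] /andP[p0 p1].
rewrite gdens0 gdensE [likratio _ _ _ _ eta * _]mulrC -mulrBr /thr_test.
case: ltP => [x_lt_eta | eta_le_x].
  rewrite mulr_ge0 ?subr_ge0 // mulr_ge0 ?fbeta_ge0 // subr_ge0.
  exact: likratio_nonincr (ltW x_lt_eta) eta1.
rewrite mulr_le0 ?sub0r ?oppr_le0 // mulr_ge0_le0 ?fbeta_ge0 // subr_le0.
exact: likratio_nonincr.
Qed.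

End LikelihoodRatio.

Theorem mainTheorem7 (R : realType) (N t r K : nat) (y : R) :
  (2 <= N)%N -> (1 <= t)%N -> (1 <= r)%N -> (t + r < N)%N -> (N <= K)%N ->
  0 < y -> y <= 1 ->
  let n0 := n0_of K N t in
  (* monotone likelihood ratio on (0,1] *)
  (forall s : R, 0 < s ->
     {in `]0, 1] &, forall x1 x2 : R, x1 <= x2 ->
        gdens n0 r y s x2 / gdens n0 r y 0 x2
        <= gdens n0 r y s x1 / gdens n0 r y 0 x1})
  /\
  (* UMP: for each threshold eta, the test [p1 < eta] has maximal power
     under every s > 0 among all (randomized) tests of no larger size *)
  (forall (eta : R), 0 < eta -> eta <= 1 ->
   forall phi : R -> R,
     measurable_fun (`]0%R, 1%R]%classic : set R) phi ->
     {in `]0, 1], forall x, 0 <= phi x <= 1} ->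
     (\int[lebesgue_measure]_(x in (`]0%R, 1%R]%classic : set R)) (phi x * gdens n0 r y 0 x)%:E
       <= \int[lebesgue_measure]_(x in (`]0%R, 1%R]%classic : set R)) (thr_test eta x * gdens n0 r y 0 x)%:E)%E ->
     forall s : R, 0 < s ->
     (\int[lebesgue_measure]_(x in (`]0%R, 1%R]%classic : set R)) (phi x * gdens n0 r y s x)%:E
       <= \int[lebesgue_measure]_(x in (`]0%R, 1%R]%classic : set R)) (thr_test eta x * gdens n0 r y s x)%:E)%E).
Proof.
move=> _ _ _ _ _ y_gt0 _ n0; have y_ge0 := ltW y_gt0.
split=> [s s_gt0|eta eta_gt0 eta_le1 phi mphi phi01 size_le s s_gt0].
  exact: gdens_mlr (ltW s_gt0).
have mD : measurable (`]0%R, 1%R]%classic : set R) by exact: measurable_itv.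
have D01 (x : R) : `]0%R, 1%R] x -> 0 <= x <= 1.
  by rewrite /= in_itv /= => /andP[/ltW -> ->].
have mgdens s' : measurable_fun (`]0%R, 1%R]%classic : set R) (gdens n0 r y s').
  exact: measurable_funS measurableT (@subsetT _ _) (measurable_gdens n0 r y s').
have mthr : measurable_fun (`]0%R, 1%R]%classic : set R) (thr_test eta).
  exact: measurable_funS measurableT (@subsetT _ _) (measurable_thr_test eta).
apply: (neyman_pearson lebesgue_measure _ mD (gdens n0 r y 0) _ _ _
         (likratio n0 r y s eta)) => //.
- by apply: likratio_ge0 => //; exact: ltW.
- exact: mgdens.
- exact: mgdens.
- by move=> x /D01; exact: gdens_ge0.
- by move=> x /D01; apply: gdens_ge0 => //; exact: ltW.
- by move=> x _; have /andP[] := thr_test_ge0 eta x.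
- by move=> x x01; have /andP[] := phi01 x (mem_set x01).
- move=> x x01; apply: thr_test_np => //; first exact: ltW.
    exact: D01.
  exact: phi01 (mem_set x01).
- have -> : gdens n0 r y 0 = fbeta n0 r by apply/funext => x; exact: gdens0.
  apply: integrable_mul_fbeta => // x _.
  by have /andP[t0 t1] := thr_test_ge0 eta x; rewrite ger0_norm.
Qed.
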